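(* Let $a,b,\alpha,\beta$ be complex numbers with $2a-b\neq 0$ and $\beta a-\alpha b\neq 0$, let $n\ge1$ be an integer, and let $s$ be a square root of $\frac{b+2a}{b-2a}$. Then \[ \Psi\left(\begin{array}{cc|c} a & b & n \\ \alpha & \beta & 0 \end{array}\right)=\Psi(a,b,n)=\frac{(2a-b)^{\lfloor n/2\rfloor}}{2^n}\Big\{(1+s)^n+(1-s)^n\Big\}, \] and, if moreover $b+2a\neq 0$, \[ \Phi\left(\begin{array}{cc|c} a & b & n \\ \alpha & \beta & 0 \end{array}\right)=\Phi(a,b,n)=\frac{(2a-b)^{\lfloor (n-1)/2\rfloor}}{2^n s}\Big\{(1+s)^n-(1-s)^n\Big\}. \]
   Context: $\delta(m)=1$ for $m$ odd, $\delta(m)=0$ for $m$ even; $\lfloor\cdot\rfloor$ is the floor. For $a,b$, the sequences $\Psi(a,b,n)$, $\Phi(a,b,n)$ ($n\ge0$) are defined by $\Psi(a,b,0)=2$, $\Psi(a,b,1)=1$, $\Psi(a,b,n+1)=(2a-b)^{\delta(n)}\Psi(a,b,n)-a\Psi(a,b,n-1)$, and $\Phi(a,b,0)=0$, $\Phi(a,b,1)=1$, $\Phi(a,b,n+1)=(2a-b)^{\delta(n+1)}\Phi(a,b,n)-a\Phi(a,b,n-1)$ for $n\ge1$. For indeterminates $a,b,\alpha,\beta$ and $n\ge1$, $\Psi\left(\begin{array}{cc|c} a & b & n \\ \alpha & \beta & r \end{array}\right)$ ($0\le r\le\lfloor n/2\rfloor$) and $\Phi\left(\begin{array}{cc|c}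 a & b & n \\ \alpha & \beta & r \end{array}\right)$ ($0\le r\le\lfloor (n-1)/2\rfloor$) denote the unique polynomials in $\mathbb{Z}[a,b,\alpha,\beta]$ such that, identically in $x,y$, $(\beta a-\alpha b)^{\lfloor n/2\rfloor}\frac{x^n+y^n}{(x+y)^{\delta(n)}}=\sum_{r}\Psi\left(\begin{array}{cc|c} a & b & n \\ \alpha & \beta & r \end{array}\right)(\alpha x^2+\beta xy+\alpha y^2)^{\lfloor n/2\rfloor-r}(ax^2+bxy+ay^2)^r$ and $(\beta a-\alpha b)^{\lfloor (n-1)/2\rfloor}\frac{x^n-y^n}{(x-y)(x+y)^{\delta(n-1)}}=\sum_{r}\Phi\left(\begin{array}{cc|c} a & b & n \\ \alpha & \beta & r \end{array}\right)(\alpha x^2+\beta xy+\alpha y^2)^{\lfloor (n-1)/2\rfloor-r}(ax^2+bxy+ay^2)^r$ (uniqueness holds since the two quadratic forms are algebraically independent when $\beta a-\alpha b\ne0$). For numerical $a,b,\alpha,\beta$ these polynomials are evaluated. *)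

(* Complex numbers are rendered as an arbitrary
   numClosedFieldType C (the complex numbers are one such field). *)
From HB Require Import structures.
From mathcomp Require Import all_boot all_order all_algebra.
From Stdlib Require Import ClassicalEpsilon.
Set Implicit Arguments. Unset Strict Implicit. Unset Printing Implicit Defensive.
Import Order.TTheory GRing.Theory Num.Theory.
Local Open Scope ring_scope.

Section Defs.
Variable C : numClosedFieldType.

(* delta(m) = odd m ; floor(n/2) = n./2 *)

(* psi_pair a b n = (Psi(a,b,n), Psi(a,b,n+1)) *)
Fixpoint psi_pair (a b : C) (n : nat) : C * C :=
  match n with
  | 0%N => (2, 1)
  | m.+1 => let: (p, q) := psi_pair a b m in
            (q, (2 * a - b) ^+ (odd m.+1) * q - a * p)
  end.
Definition Psi (a b : C) (n : nat) : C := (psi_pair a b n).1.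

(* phi_pair a b n = (Phi(a,b,n), Phi(a,b,n+1)) *)
Fixpoint phi_pair (a b : C) (n : nat) : C * C :=
  match n with
  | 0%N => (0, 1)
  | m.+1 => let: (p, q) := phi_pair a b m in
            (q, (2 * a - b) ^+ (odd m.+2) * q - a * p)
  end.
Definition Phi (a b : C) (n : nat) : C := (phi_pair a b n).1.

Definition qform (u v x y : C) : C := u * x ^+ 2 + v * x * y + u * y ^+ 2.

(* c is a family of coefficients such that, identically in x, y,
   (beta a - alpha b)^(n/2) (x^n+y^n)/(x+y)^delta(n)
     = sum_r c_r (alpha x^2+beta xy+alpha y^2)^(n/2-r) (a x^2+bxy+ay^2)^r
   (the division is cleared, which is equivalent for polynomial identities). *)
Definition is_Psi_coefs (a b al be : C) (n : nat) (c : nat -> C) : Prop :=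
  forall x y : C,
    (be * a - al * b) ^+ (n./2) * (x ^+ n + y ^+ n) =
    (x + y) ^+ (odd n) *
      \sum_(r < (n./2).+1) c r * qform al be x y ^+ (n./2 - r) * qform a b x y ^+ r.

Definition is_Phi_coefs (a b al be : C) (n : nat) (c : nat -> C) : Prop :=
  forall x y : C,
    (be * a - al * b) ^+ ((n.-1)./2) * (x ^+ n - y ^+ n) =
    (x - y) * (x + y) ^+ (odd n.-1) *
      \sum_(r < ((n.-1)./2).+1)
          c r * qform al be x y ^+ ((n.-1)./2 - r) * qform a b x y ^+ r.

(* The (evaluated) coefficient polynomials: a chosen coefficient family
   satisfying the identity (unique when beta a - alpha b <> 0). *)
Definition Psi_coef (a b al be : C) (n r : nat) : C :=
  epsilon (inhabits (fun _ : nat => (0 : C))) (is_Psi_coefs a b al be n) r.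
Definition Phi_coef (a b al be : C) (n r : nat) : C :=
  epsilon (inhabits (fun _ : nat => (0 : C))) (is_Phi_coefs a b al be n) r.

End Defs.

From HB Require Import structures.
From mathcomp Require Import all_boot all_order all_algebra.
From mathcomp Require Import ring.
From Stdlib Require Import ClassicalEpsilon.
Import Order.TTheory GRing.Theory Num.Theory.
Set Implicit Arguments. Unset Strict Implicit.
Local Open Scope ring_scope.

(** Put w = 2a - b and pick x, y with x + y = 1 and w x y = a, namely
    x, y = (1 +- s)/2.  Both Psi(a,b,n) and w^(n/2) (x^n + y^n) satisfy the
    two-term recurrence defining Psi, so they agree; likewise for
    (x - y) Phi(a,b,n) and w^((n-1)/2) (x^n - y^n).  At such a point
    a x^2 + b x y + a y^2 vanishes and w (al x^2 + be x y + al y^2) = be a - al b,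
    so evaluating the identity defining the coefficients there kills every term
    with r > 0 and isolates the coefficient with r = 0.  Coefficient families
    exist because x^(k+4) +- y^(k+4) = (x^2 + y^2)(x^(k+2) +- y^(k+2))
    - (x y)^2 (x^k +- y^k) and (be a - al b) (x^2 + y^2), (be a - al b) x y are
    linear combinations of the two quadratic forms. *)

Lemma power_comb_recurrence (R : comPzRingType) (u v x y : R) (d j : nat) :
  u * x ^+ (j + d + d) + v * y ^+ (j + d + d) =
  (x ^+ d + y ^+ d) * (u * x ^+ (j + d) + v * y ^+ (j + d))
  - (x * y) ^+ d * (u * x ^+ j + v * y ^+ j).
Proof. by rewrite !exprD exprMn; ring. Qed.

Lemma eq_recurrence2 (T : Type) (f : nat -> T -> T -> T) (u v : nat -> T) :
  u 0%N = v 0%N -> u 1%N = v 1%N ->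
  (forall n, u n.+2 = f n (u n.+1) (u n)) -> (forall n, v n.+2 = f n (v n.+1) (v n)) ->
  forall n, u n = v n.
Proof.
move=> u0 u1 uS vS n; suff [] : u n = v n /\ u n.+1 = v n.+1 by [].
by elim: n => [|n [eq_n eq_n1]]; split; rewrite ?uS ?vS ?eq_n ?eq_n1.
Qed.

Section BinaryForms.
Variables (R : comPzRingType) (P Q : R -> R -> R).

Definition form (c : nat -> R) (m : nat) (x y : R) : R :=
  \sum_(r < m.+1) c r * P x y ^+ (m - r) * Q x y ^+ r.

Definition is_form_multiple (L : R -> R -> R) (m : nat) (F : R -> R -> R) :=
  exists c, forall x y, F x y = L x y * form c m x y.

Lemma form0 c x y : form c 0 x y = c 0%N.
Proof. by rewrite /form big_ord1 !mulr1. Qed.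

Lemma form1 c x y : form c 1 x y = c 0%N * P x y + c 1%N * Q x y.
Proof. by rewrite /form !big_ord_recl big_ord0 /= subn0 subnn addr0 expr1 !mulr1. Qed.

Lemma form_Q0 c m x y : Q x y = 0 -> form c m x y = c 0%N * P x y ^+ m.
Proof.
move=> Q0; rewrite /form big_ord_recl big1 ?addr0 ?subn0 ?mulr1 // => i _.
by rewrite Q0 expr0n mulr0.
Qed.

Variable L : R -> R -> R.

Lemma eq_form_multiple m F G :
  is_form_multiple L m F -> F =2 G -> is_form_multiple L m G.
Proof. by move=> [c Fc] eqFG; exists c => x y; rewrite -eqFG. Qed.

Lemma form_multipleD m F G :
  is_form_multiple L m F -> is_form_multiple L m G ->
  is_form_multiple L m (fun x y => F x y + G x y).
Proof.
move=> [c Fc] [d Gd]; exists (fun r => c r + d r) => x y.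
rewrite Fc Gd -mulrDr /form -big_split /=; congr (_ * _).
by apply: eq_bigr => r _; rewrite !mulrDl.
Qed.

Lemma form_multiple_mul_linear m p q F :
  is_form_multiple L m F ->
  is_form_multiple L m.+1 (fun x y => (p * P x y + q * Q x y) * F x y).
Proof.
move=> [c Fc].
exists (fun r => p * (if (r <= m)%N then c r else 0) + q * (if r is r'.+1 then c r' else 0)).
move=> x y; rewrite Fc mulrCA; congr (_ * _); rewrite /form mulrDl !mulr_sumr.
under [RHS]eq_bigr do rewrite !mulrDl.
rewrite big_split /= [X in _ = X + _]big_ord_recr [X in _ = _ + X]big_ord_recl /=.
rewrite ltnn mulr0 !mul0r addr0 mulr0 !mul0r add0r.
congr (_ + _); apply: eq_bigr => i _.
  by rewrite /= -ltnS ltn_ord subSn ?exprS; [ring | rewrite -ltnS ltn_ord].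
by rewrite /bump /= add1n subSS exprS; ring.
Qed.

Lemma form_multiple_recurrence (D : R) (U V : R -> R -> R) (g : nat -> R -> R -> R)
    (pU qU pV qV : R) :
  (forall x y, D * U x y = pU * P x y + qU * Q x y) ->
  (forall x y, D * V x y = pV * P x y + qV * Q x y) ->
  (forall k x y, g k.+2 x y = U x y * g k.+1 x y - V x y ^+ 2 * g k x y) ->
  is_form_multiple L 0 (g 0%N) -> is_form_multiple L 1 (fun x y => D * g 1%N x y) ->
  forall k, is_form_multiple L k (fun x y => D ^+ k * g k x y).
Proof.
move=> DU DV gS g0 g1 k.
suff [] : is_form_multiple L k (fun x y => D ^+ k * g k x y) /\
          is_form_multiple L k.+1 (fun x y => D ^+ k.+1 * g k.+1 x y) by [].
elim: k => [|k [gk gk1]].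
  by split; [apply: (eq_form_multiple g0) => x y; rewrite mul1r
            | apply: (eq_form_multiple g1) => x y; rewrite expr1].
split=> //.
have := form_multipleD (form_multiple_mul_linear pU qU gk1)
          (form_multiple_mul_linear (- pV) (- qV) (form_multiple_mul_linear pV qV gk)).
move/eq_form_multiple; apply=> x y.
by rewrite gS -DU !mulNr -opprD -DV !exprS; ring.
Qed.

End BinaryForms.

Lemma half_weighted_recurrence (R : comPzRingType) (w a v : R) (p : nat -> R) :
  w * v = a -> (forall n, p n.+2 = p n.+1 - v * p n) ->
  forall n, w ^+ n.+2./2 * p n.+2 =
            w ^+ odd n.+1 * (w ^+ n.+1./2 * p n.+1) - a * (w ^+ n./2 * p n).
Proof.
move=> wv pS n; rewrite pS -wv /= uphalf_half.
by case: odd; rewrite /= ?add0n ?add1n !exprS; ring.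
Qed.

Lemma scale_pow_cancel (R : idomainType) (w p d c A : R) k :
  d != 0 -> w * p = d -> d ^+ k * A = c * p ^+ k -> c = w ^+ k * A.
Proof.
move=> d_neq0 wp dA; apply: (mulfI (expf_neq0 k d_neq0)).
by rewrite mulrCA dA -wp exprMn; ring.
Qed.

Lemma PsiSS (C : numClosedFieldType) (a b : C) n :
  Psi a b n.+2 = (2 * a - b) ^+ odd n.+1 * Psi a b n.+1 - a * Psi a b n.
Proof. by rewrite /Psi /=; case: psi_pair => p q /=. Qed.

Lemma PhiSS (C : numClosedFieldType) (a b : C) n :
  Phi a b n.+2 = (2 * a - b) ^+ odd n * Phi a b n.+1 - a * Phi a b n.
Proof. by rewrite /Phi /=; case: phi_pair => p q /=; rewrite negbK. Qed.

Section CoefficientFamilies.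
Variables (C : numClosedFieldType) (a b al be : C).
Local Notation D := (be * a - al * b).
Local Notation P := (qform al be).
Local Notation Q := (qform a b).

Lemma qform_span_sqr_sum x y : D * (x ^+ 2 + y ^+ 2) = - b * P x y + be * Q x y.
Proof. by rewrite /qform; ring. Qed.

Lemma qform_span_mul x y : D * (x * y) = a * P x y + - al * Q x y.
Proof. by rewrite /qform; ring. Qed.

Lemma power_sum_form_multiple (t : bool) k :
  is_form_multiple P Q (fun x y => (x + y) ^+ t) k
    (fun x y => D ^+ k * (x ^+ (t + k.*2) + y ^+ (t + k.*2))).
Proof.
apply: (form_multiple_recurrence
          (g := fun k x y => x ^+ (t + k.*2) + y ^+ (t + k.*2)))
       qform_span_sqr_sum qform_span_mul _ _ _ k.
- move=> j x y; have := power_comb_recurrence 1 1 x y 2 (t + j.*2).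
  by rewrite !mul1r -!addnA !doubleS !addnS !addn0.
- by case: t; [exists (fun=> 1) | exists (fun=> 2)] => x y; rewrite form0 /=; ring.
case: t; [exists (fun r => if r is 0%N then - (a + b) else be + al)
         | exists (fun r => if r is 0%N then - b else be)] => x y;
  by rewrite form1 /qform /=; ring.
Qed.

Lemma power_diff_form_multiple (t : bool) k :
  is_form_multiple P Q (fun x y => (x - y) * (x + y) ^+ t) k
    (fun x y => D ^+ k * (x ^+ (t + k.*2).+1 - y ^+ (t + k.*2).+1)).
Proof.
apply: (form_multiple_recurrence
          (g := fun k x y => x ^+ (t + k.*2).+1 - y ^+ (t + k.*2).+1))
       qform_span_sqr_sum qform_span_mul _ _ _ k.
- move=> j x y; have := power_comb_recurrence 1 (-1) x y 2 (t + j.*2).+1.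
  by rewrite !mul1r !mulN1r -!addnA !doubleS !addnS !addn0.
- by exists (fun=> 1) => x y; rewrite form0; case: t => /=; ring.
case: t; [exists (fun r => if r is 0%N then - b else be)
         | exists (fun r => if r is 0%N then a - b else be - al)] => x y;
  by rewrite form1 /qform /=; ring.
Qed.

Lemma Psi_coefs_exist n : exists c, is_Psi_coefs a b al be n c.
Proof.
have [c Hc] := power_sum_form_multiple (odd n) n./2.
by exists c => x y; move: (Hc x y); rewrite odd_double_half.
Qed.

Lemma Phi_coefs_exist n : (0 < n)%N -> exists c, is_Phi_coefs a b al be n c.
Proof.
case: n => // n _; have [c Hc] := power_diff_form_multiple (odd n) n./2.
by exists c => x y; move: (Hc x y); rewrite odd_double_half.
Qed.

Lemma Psi_coef_spec n : is_Psi_coefs a b al be n (Psi_coef a b al be n).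
Proof. exact: epsilon_spec (Psi_coefs_exist n). Qed.

Lemma Phi_coef_spec n : (0 < n)%N -> is_Phi_coefs a b al be n (Phi_coef a b al be n).
Proof. by move=> n_gt0; apply: epsilon_spec (Phi_coefs_exist n_gt0). Qed.

End CoefficientFamilies.

Section SpecialPoint.
Variables (C : numClosedFieldType) (a b al be x y : C).
Hypotheses (xy_sum : x + y = 1) (xy_mul : (2 * a - b) * (x * y) = a).
Local Notation D := (be * a - al * b).

Lemma qform_special_root : qform a b x y = 0.
Proof.
rewrite (_ : qform a b x y = a * (x + y) ^+ 2 - (2 * a - b) * (x * y)).
  by rewrite xy_sum xy_mul expr1n mulr1 subrr.
by rewrite /qform; ring.
Qed.

Lemma qform_special_value : (2 * a - b) * qform al be x y = D.
Proof.
rewrite (_ : _ * _ = al * (2 * a - b) * (x + y) ^+ 2 + (be - 2 * al) * ((2 * a - b) * (x * y))).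
  by rewrite xy_sum xy_mul; ring.
by rewrite /qform; ring.
Qed.

Lemma Psi_coefs0 n c : D != 0 -> is_Psi_coefs a b al be n c ->
  c 0%N = (2 * a - b) ^+ n./2 * (x ^+ n + y ^+ n).
Proof.
move=> D_neq0 /(_ x y); rewrite -/(form (qform al be) (qform a b) c _ x y).
rewrite form_Q0 ?qform_special_root // xy_sum expr1n mul1r.
exact: scale_pow_cancel D_neq0 qform_special_value.
Qed.

Lemma Phi_coefs0 n c : D != 0 -> is_Phi_coefs a b al be n c ->
  (x - y) * c 0%N = (2 * a - b) ^+ (n.-1)./2 * (x ^+ n - y ^+ n).
Proof.
move=> D_neq0 /(_ x y); rewrite -/(form (qform al be) (qform a b) c _ x y).
rewrite form_Q0 ?qform_special_root // xy_sum expr1n mulr1 mulrA.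
exact: scale_pow_cancel D_neq0 qform_special_value.
Qed.

Lemma Psi_power_sum n : Psi a b n = (2 * a - b) ^+ n./2 * (x ^+ n + y ^+ n).
Proof.
move: n; apply: (eq_recurrence2 (f := fun n p q => (2 * a - b) ^+ odd n.+1 * p - a * q)
          (u := Psi a b) (v := fun n => (2 * a - b) ^+ n./2 * (x ^+ n + y ^+ n))).
- by rewrite /Psi /= mul1r.
- by rewrite /Psi /= mul1r !expr1.
- exact: PsiSS.
apply: half_weighted_recurrence xy_mul _ => n.
by have := power_comb_recurrence 1 1 x y 1 n; rewrite !mul1r !expr1 xy_sum mul1r !addn1.
Qed.

(* Shifted by one because the exponent (n.-1)./2 is truncated at n = 0. *)
Lemma Phi_power_diff n :
  (x - y) * Phi a b n.+1 = (2 * a - b) ^+ n./2 * (x ^+ n.+1 - y ^+ n.+1).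
Proof.
move: n; apply: (eq_recurrence2 (f := fun n p q => (2 * a - b) ^+ odd n.+1 * p - a * q)
          (u := fun n => (x - y) * Phi a b n.+1)
          (v := fun n => (2 * a - b) ^+ n./2 * (x ^+ n.+1 - y ^+ n.+1))).
- by rewrite /Phi /= mul1r expr1 mulr1.
- by rewrite /Phi /= expr0 !mul1r mulr0 subr0 mulr1 subr_sqr xy_sum mulr1.
- by move=> n; rewrite PhiSS /=; ring.
apply: half_weighted_recurrence xy_mul _ => n.
have := power_comb_recurrence 1 (-1) x y 1 n.+1.
by rewrite !mul1r !mulN1r !expr1 xy_sum mul1r !addn1.
Qed.

End SpecialPoint.

Theorem theorem5p1 (C : numClosedFieldType) (a b al be : C) (n : nat) (s : C) :
  2 * a - b != 0 -> be * a - al * b != 0 -> (0 < n)%N ->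
  s ^+ 2 = (b + 2 * a) / (b - 2 * a) ->
  (Psi_coef a b al be n 0 = Psi a b n /\
   Psi a b n = (2 * a - b) ^+ (n./2) / 2 ^+ n * ((1 + s) ^+ n + (1 - s) ^+ n)) /\
  (b + 2 * a != 0 ->
   Phi_coef a b al be n 0 = Phi a b n /\
   Phi a b n = (2 * a - b) ^+ ((n.-1)./2) / (2 ^+ n * s) * ((1 + s) ^+ n - (1 - s) ^+ n)).
Proof.
move=> w_neq0 D_neq0 n_gt0 s2.
have two_neq0 : (2 : C) != 0 by rewrite pnatr_eq0.
have bw_neq0 : b - 2 * a != 0 by rewrite -opprB oppr_eq0.
pose x := (1 + s) / 2; pose y := (1 - s) / 2.
have xy_sum : x + y = 1 by rewrite /x /y; field.
have xy_mul : (2 * a - b) * (x * y) = a.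
  have -> : x * y = (1 - s ^+ 2) / 4 by rewrite /x /y; field.
  by rewrite s2; field.
split; first split.
  rewrite (Psi_coefs0 xy_sum xy_mul D_neq0 (Psi_coef_spec _ _ _ _ _)).
  by rewrite (Psi_power_sum xy_sum xy_mul).
  by rewrite (Psi_power_sum xy_sum xy_mul) /x /y !expr_div_n; field; rewrite expf_neq0.
move=> b2a_neq0.
have s_neq0 : s != 0.
  apply: contraNneq b2a_neq0 => s0.
  by rewrite -(divfK bw_neq0 (b + 2 * a)) -s2 s0 expr0n /= mul0r.
have xy_diff : x - y = s by rewrite /x /y; field.
case: n n_gt0 => // m m_gt0.
split; apply: (mulfI s_neq0); rewrite -{1}xy_diff.
  rewrite (Phi_coefs0 xy_sum xy_mul D_neq0 (Phi_coef_spec _ _ _ _ m_gt0)).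
  by rewrite -xy_diff (Phi_power_diff xy_sum xy_mul).
rewrite (Phi_power_diff xy_sum xy_mul) /x /y !expr_div_n; field.
by rewrite s_neq0 expf_neq0.
Qed.
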